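(* Let $\Omega$, $B$, $B^+$, $Z$, $B_Z$, $\mathcal{P}_Z$ and $G$ be as in the context, and let $\alpha:\mathcal{P}_Z\to\mathbb{R}_+\cup\{+\infty\}$ satisfy (A1) $\inf_{\mathbb{P}\in\mathcal{P}_Z}\alpha(\mathbb{P})=0$, and (A2) $\alpha(\mathbb{P})\ge\mathbb{E}^{\mathbb{P}}\beta(Z)$ for all $\mathbb{P}\in\mathcal{P}_Z$, where $\beta:[1,\infty)\to\mathbb{R}$ is an increasing function (i.e. $\beta(x)\ge\beta(y)$ for $x\ge y$) with $\lim_{x\to\infty}\beta(x)/x=+\infty$. Let $A=\{X\in B_Z:\mathbb{E}^{\mathbb{P}}X+\alpha(\mathbb{P})\ge0\text{ for all }\mathbb{P}\in\mathcal{P}_Z\}+B^+$. Then for every $n\in\mathbb{N}$ there exists $z\in\mathbb{R}_+$ such that $n(Z-z)^+-\frac1n\in G-A$.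
   Context: Fix integers $J\ge0$, $T\ge1$. $\Omega$ is a non-empty subset of $((0,\infty)\times\mathbb{R}^J)^T$, endowed with the Euclidean metric. $B$ is the space of all Borel measurable functions $X:\Omega\to\mathbb{R}$ and $B^+=\{X\in B:X\ge0\}$. $Z:\Omega\to[1,\infty)$ is a continuous function such that $\{\omega\in\Omega:Z(\omega)\le z\}$ is compact for every $z\in\mathbb{R}_+$. $B_Z$ is the set of $X\in B$ with $X/Z$ bounded, and $\mathcal{P}_Z$ the set of Borel probability measures $\mathbb{P}$ on $\Omega$ with $\mathbb{E}^{\mathbb{P}}Z<\infty$. $G\subseteq B$ is a set with $0\in G$. $G-A=\{g-a:g\in G,a\in A\}$; sums of sets are Minkowski sums. The convention $x+(+\infty)=+\infty$ is used. *)

From HB Require Import structures.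
From mathcomp Require Import all_boot all_order all_algebra.
From mathcomp Require Import all_classical all_reals all_analysis.
Import Order.TTheory GRing.Theory Num.Theory.
Import numFieldNormedType.Exports.
Set Implicit Arguments. Unset Strict Implicit. Unset Printing Implicit Defensive.
Local Open Scope classical_set_scope.
Local Open Scope ring_scope.

(* Ambient space ((0,oo) x R^J)^T is encoded as T x (J+1) real matrices:
   row t = (S_t, Y_t^1, ..., Y_t^J); the first column must be positive. *)
Definition Amb (R : realType) (T J : nat) := 'M[R]_(T, J.+1).

(* The state space Omega as a subtype of the ambient space; the witness w0
   (non-emptiness of Omega) is used only to equip it with a default point. *)
Definition Osub (R : realType) (T J : nat) (Om : set (Amb R T J))
  (w0 : {x : Amb R T J | Om x}) : Type := {x : Amb R T J | Om x}.

HB.instance Definition _ R T J Om w0 := gen_eqMixin (@Osub R T J Om w0).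
HB.instance Definition _ R T J Om w0 := gen_choiceMixin (@Osub R T J Om w0).
HB.instance Definition _ R T J Om w0 :=
  isPointed.Build (@Osub R T J Om w0) w0.

(* Generators of the Borel sigma-algebra of Omega (subspace topology):
   traces on Omega of open subsets of the ambient space. *)
Definition borel_gen (R : realType) (T J : nat) (Om : set (Amb R T J))
  (w0 : {x : Amb R T J | Om x}) : set (set (Osub w0)) :=
  [set S | exists U : set 'M[R]_(T, J.+1), open U /\ S = [set x | U (sval x)]].

Definition Omeas (R : realType) (T J : nat) (Om : set (Amb R T J))
  (w0 : {x : Amb R T J | Om x}) := g_sigma_algebraType (@borel_gen R T J Om w0).

Definition pt (R : realType) (T J : nat) (Om : set (Amb R T J))
  (w0 : {x : Amb R T J | Om x}) (w : Omeas w0) : Amb R T J := sval w.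

Section Spaces.
Variables (R : realType) (T J : nat) (Om : set (Amb R T J))
  (w0 : {x : Amb R T J | Om x}) (Z : Amb R T J -> R).

Definition Bset : set (Omeas w0 -> R) := [set X | measurable_fun setT X].

Definition Bplus : set (Omeas w0 -> R) := [set X | Bset X /\ forall w, 0 <= X w].

Definition BZ : set (Omeas w0 -> R) :=
  [set X | Bset X /\ exists c : R, forall w : Omeas w0, `|X w / Z (pt w)| <= c].

Definition PZ : set (probability (Omeas w0) R) :=
  [set P | (\int[P]_w (Z (pt w))%:E < +oo)%E].

Definition Aset (alpha : probability (Omeas w0) R -> \bar R) : set (Omeas w0 -> R) :=
  [set f | exists X Y, (BZ X /\ forall P, PZ P ->
                          (0 <= \int[P]_w (X w)%:E + alpha P)%E)
                        /\ Bplus Y /\ f = X \+ Y].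

Definition setminus_fun (G A : set (Omeas w0 -> R)) : set (Omeas w0 -> R) :=
  [set f | exists g a, G g /\ A a /\ f = g \- a].

End Spaces.

Arguments Bset {R T J Om} w0 _.
Arguments Bplus {R T J Om} w0 _.
Arguments BZ {R T J Om} w0 Z _.
Arguments PZ {R T J Om} w0 Z _.
Arguments Aset {R T J Om} w0 Z alpha _.
Arguments setminus_fun {R T J Om} w0 G A _.

(* Take X := 1/n - n(Z - z)^+, so that the target function is 0 - X with
   0 in G, and A contains X as soon as X is in B_Z and E^P X + alpha(P) >= 0
   on P_Z.  With c := max(0, -beta 1), superlinearity of beta yields z such
   that beta(Z) >= (1 + c n) n(Z - z)^+ - c pointwise, hence by (A2)
   alpha(P) >= (1 + c n) Q - c where Q := E^P n(Z - z)^+.  If Q <= 1/n the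
   claim follows from alpha >= 0; otherwise n Q >= 1, so c n Q >= c and
   alpha(P) >= Q. *)

From HB Require Import structures.
From mathcomp Require Import all_boot all_order all_algebra.
From mathcomp Require Import all_classical all_reals all_analysis.
From mathcomp Require Import measurable_realfun lra.
Import Order.TTheory GRing.Theory Num.Theory.
Import numFieldNormedType.Exports.
Set Implicit Arguments. Unset Strict Implicit. Unset Printing Implicit Defensive.
Local Open Scope classical_set_scope.
Local Open Scope ring_scope.

Section real_bounds.
Variable R : realFieldType.

Lemma superlinear_ge_scaled_pos_part (beta : R -> R) (K M c z x : R) :
  (forall x y, 1 <= y -> y <= x -> beta y <= beta x) ->
  (forall x, M < x -> K <= beta x / x) ->
  0 <= K -> 0 <= c -> - c <= beta 1 -> M < z -> 0 <= z -> 1 <= x ->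
  K * Num.max (x - z) 0 - c <= beta x.
Proof.
move=> beta_incr beta_sup K0 c0 cb Mz z0 x1.
have x0 : 0 < x by apply: lt_le_trans x1.
have [zx|xz] := leP z x.
- rewrite max_l ?subr_ge0 // mulrBr.
  have := beta_sup x (lt_le_trans Mz zx); rewrite ler_pdivlMr // => Kx.
  have := mulr_ge0 K0 z0; lra.
- rewrite max_r ?subr_le0 ?(ltW xz) // mulr0 sub0r.
  by apply: le_trans cb _; apply: beta_incr.
Qed.

Lemma invr_sub_add_ge0 (n c Q : R) (a : \bar R) :
  0 < n -> 0 <= c -> (0 <= a)%E -> (((1 + c * n) * Q - c)%:E <= a)%E ->
  (0 <= (n^-1 - Q)%:E + a)%E.
Proof.
move=> n0 c0; case: a => [a| |] //=; rewrite !lee_fin => a0 aQ.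
have ni0 : 0 < n^-1 by rewrite invr_gt0.
have [Qn|nQ] := leP Q n^-1; first lra.
have nQ1 : 1 <= n * Q by rewrite -(mulfV (lt0r_neq0 n0)) ler_pM2l // ltW.
have := ler_wpM2l c0 nQ1; rewrite mulr1 mulrA.
rewrite mulrDl mul1r in aQ; lra.
Qed.

End real_bounds.

Section measure_space.
Variables (d : measure_display) (T : measurableType d) (R : realType).

Lemma le_integral_measurable (mu : {measure set T -> \bar R}) (f g : T -> R) :
  measurable_fun setT f -> measurable_fun setT g -> (forall x, f x <= g x) ->
  (\int[mu]_x (f x)%:E <= \int[mu]_x (g x)%:E)%E.
Proof.
move=> mf mg fg.
have mf' : measurable_fun setT (fun x => (f x)%:E) by exact/measurable_EFinP.
have mg' : measurable_fun setT (fun x => (g x)%:E) by exact/measurable_EFinP.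
rewrite integralE [leRHS]integralE; apply: leeB.
- apply: (@ge0_le_integral _ _ _ mu setT measurableT).
  + by move=> x _; exact: funepos_ge0.
  + exact: measurable_funepos.
  + exact: measurable_funepos.
  + by move=> x _; rewrite !funeposE /= ge_max !le_max lexx !orbT andbT lee_fin fg.
- apply: (@ge0_le_integral _ _ _ mu setT measurableT).
  + by move=> x _; exact: funeneg_ge0.
  + exact: measurable_funeneg.
  + exact: measurable_funeneg.
  + by move=> x _; rewrite !funenegE /= ge_max !le_max lexx !orbT andbT lee_fin lerN2 fg.
Qed.

Lemma probability_integral_affine (P : probability T R) (f : T -> R) (a b : R) :
  P.-integrable setT (EFin \o f) ->
  (\int[P]_x (a * f x + b)%:E = a%:E * \int[P]_x (f x)%:E + b%:E)%E.
Proof.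
move=> intf; under eq_integral do rewrite EFinD EFinM.
rewrite integralD //; first last.
- exact: finite_measure_integrable_cst.
- exact: integrableZl.
rewrite integralZl // integral_cst //; congr (_ + _)%E.
by rewrite -[RHS]mule1; congr (_ * _)%E; exact: probability_setT.
Qed.

Lemma measurable_fun_nondecreasing_comp (beta : R -> R) (f : T -> R) :
  (forall x y, 1 <= y -> y <= x -> beta y <= beta x) ->
  measurable_fun setT f -> (forall t, 1 <= f t) -> measurable_fun setT (beta \o f).
Proof.
move=> beta_incr mf f1.
(* beta is only monotone on [1, +oo[; extend it constantly to the left. *)
have mb : measurable_fun setT (fun x : R => beta (Num.max x 1)).
  apply: nondecreasing_measurable => // x y xy.
  apply: beta_incr; first by rewrite le_max lexx orbT.
  by rewrite ge_max !le_max xy lexx !orbT.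
apply: (eq_measurable_fun _ _ (measurableT_comp mb mf)) => t _.
by rewrite /= max_l.
Qed.

Lemma integral_invr_sub_add_ge0 (P : probability T R) (q g : T -> R) (n c : R)
    (a : \bar R) :
  0 < n -> 0 <= c -> P.-integrable setT (EFin \o q) ->
  measurable_fun setT g -> (forall x, (1 + c * n) * q x - c <= g x) ->
  (\int[P]_x (g x)%:E <= a)%E -> (0 <= a)%E ->
  (0 <= \int[P]_x (n^-1 - q x)%:E + a)%E.
Proof.
move=> n0 c0 intq mg qg ga a0.
have mq : measurable_fun setT q by apply/measurable_EFinP; exact: measurable_int intq.
have [Q QE] : exists Q, (\int[P]_x (q x)%:E = Q%:E)%E.
  by exists (fine (\int[P]_x (q x)%:E)%E); rewrite fineK // integrable_fin_num.
have -> : (\int[P]_x (n^-1 - q x)%:E = (n^-1 - Q)%:E)%E.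
  under eq_integral do rewrite addrC -mulN1r.
  by rewrite probability_integral_affine // QE -EFinM -EFinD mulN1r addrC.
apply: (@invr_sub_add_ge0 _ n c) => //; apply: le_trans ga.
rewrite EFinB EFinM -QE.
rewrite -probability_integral_affine //; apply: le_integral_measurable => //.
by apply: measurable_funD => //; apply: measurable_funM.
Qed.

End measure_space.

Section Omega.
Variables (R : realType) (T J : nat) (Om : set (Amb R T J)).
Variable w0 : {x : Amb R T J | Om x}.

Lemma measurable_fun_pt_continuous (f : Amb R T J -> R) :
  {within Om, continuous f} -> measurable_fun setT (fun w : Omeas w0 => f (pt w)).
Proof.
move=> /continuousP fc.
apply: (measurability _ (measurable_realfun.RGenOpens.measurableE R)).
move=> _ [_ [a [b ->]] <-].
have /open_subspaceP [U oU fU] := fc _ (@interval_open R (BRight a) (BLeft b) isT isT).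
apply: sub_sigma_algebra; exists U; split => //.
have Ow (w : Omeas w0) : Om (sval w) := proj2_sig w.
apply/seteqP; split => w /=.
- move=> [_ fw].
  have : (from_subspace Om f @^-1` `]a, b[ `&` Om) (sval w) by split.
  by rewrite -fU => -[].
- move=> Uw; split => //.
  have : (U `&` Om) (sval w) by split.
  by rewrite fU => -[].
Qed.

Variable Z : Amb R T J -> R.
Hypothesis Z1 : forall w : Omeas w0, 1 <= Z (pt w).
Hypothesis mZ : measurable_fun setT (fun w : Omeas w0 => Z (pt w)).

Lemma integrable_PZ (P : probability (Omeas w0) R) :
  PZ w0 Z P -> P.-integrable setT (EFin \o (fun w : Omeas w0 => Z (pt w))).
Proof.
move=> PZP; apply/integrableP; split; first exact/measurable_EFinP.
rewrite (eq_integral (fun w => (Z (pt w))%:E)) //.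
by move=> w _; rewrite gee0_abs // lee_fin (le_trans _ (Z1 w)).
Qed.

Definition excess (n : nat) (z : R) (w : Omeas w0) : R :=
  n%:R * Num.max (Z (pt w) - z) 0.

Lemma excess_ge0 n z w : 0 <= excess n z w.
Proof. by rewrite mulr_ge0 ?ler0n // le_max lexx orbT. Qed.

Lemma excess_le n z w : 0 <= z -> excess n z w <= n%:R * Z (pt w).
Proof.
move=> z0; rewrite ler_wpM2l ?ler0n // ge_max lerBlDr lerDl z0 /=.
exact: le_trans (Z1 w).
Qed.

Lemma measurable_excess n z : measurable_fun setT (excess n z).
Proof.
by apply: measurable_funM => //; apply: measurable_maxr => //; apply: measurable_funB.
Qed.

Lemma integrable_excess n z (P : probability (Omeas w0) R) :
  0 <= z -> PZ w0 Z P -> P.-integrable setT (EFin \o excess n z).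
Proof.
move=> z0 PZP.
have intnZ : P.-integrable setT (fun w => (n%:R)%:E * (Z (pt w))%:E)%E.
  by apply: integrableZl => //; exact: integrable_PZ.
apply: (le_integrable measurableT _ _ intnZ).
  by apply/measurable_EFinP; exact: measurable_excess.
move=> w _; rewrite -EFinM !gee0_abs ?lee_fin ?excess_ge0 ?excess_le //.
by rewrite mulr_ge0 ?ler0n // (le_trans _ (Z1 w)).
Qed.

Lemma BZ_affine_bound (X : Omeas w0 -> R) (a b : R) :
  measurable_fun setT X -> 0 <= a ->
  (forall w, `|X w| <= a + b * Z (pt w)) -> BZ w0 Z X.
Proof.
move=> mX a0 Xab; split => //; exists (a + b) => w.
have Z0 : 0 < Z (pt w) by apply: lt_le_trans (Z1 w).
rewrite normrM normfV (gtr0_norm Z0) ler_pdivrMr // mulrDl.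
apply: le_trans (Xab w) _; rewrite lerD2r ler_peMr //.
Qed.

Lemma BZ_invn_sub_excess n z :
  (0 < n)%N -> 0 <= z -> BZ w0 Z (fun w => n%:R^-1 - excess n z w).
Proof.
move=> n0 z0; apply: (@BZ_affine_bound _ n%:R^-1 n%:R).
- by apply: measurable_funB => //; exact: measurable_excess.
- by rewrite invr_ge0.
move=> w; apply: le_trans (ler_normB _ _) _.
by rewrite ger0_norm ?invr_ge0 // ger0_norm ?excess_ge0 // lerD2l excess_le.
Qed.

Lemma Aset_BZ (alpha : probability (Omeas w0) R -> \bar R) (X : Omeas w0 -> R) :
  BZ w0 Z X -> (forall P, PZ w0 Z P -> (0 <= \int[P]_w (X w)%:E + alpha P)%E) ->
  Aset w0 Z alpha X.
Proof.
move=> BZX XP; exists X, (fun _ => 0); split => //; split; last first.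
  by apply/funext => w; rewrite /= addr0.
by split => //; exact: measurable_cst.
Qed.

Lemma setminus_fun_opp (G A : set (Omeas w0 -> R)) (a : Omeas w0 -> R) :
  G (fun _ => 0) -> A a -> setminus_fun w0 G A (fun w => - a w).
Proof.
move=> G0 Aa; exists (fun _ => 0), a; do 2!split => //.
by apply/funext => w; rewrite /= sub0r.
Qed.

End Omega.

Theorem proposition2p2 (R : realType) (T J : nat) (hT : (0 < T)%N)
  (Om : set (Amb R T J)) (w0 : {x : Amb R T J | Om x})
  (hOm : forall x, Om x -> forall t : 'I_T, 0 < x t ord0)
  (Z : Amb R T J -> R)
  (hZ1 : forall x, Om x -> 1 <= Z x)
  (hZc : {within Om, continuous Z})
  (hZk : forall z : R, 0 <= z -> compact (Om `&` [set x | Z x <= z]))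
  (G : set (Omeas w0 -> R)) (hGB : G `<=` Bset w0) (hG0 : G (fun _ => 0))
  (alpha : probability (Omeas w0) R -> \bar R)
  (halpha : forall P, PZ w0 Z P -> (0 <= alpha P)%E)
  (A1 : ereal_inf [set alpha P | P in PZ w0 Z] = 0%E)
  (beta : R -> R)
  (hbeta_incr : forall x y, 1 <= y -> y <= x -> beta y <= beta x)
  (hbeta_lim : (fun x => beta x / x) @ +oo --> +oo)
  (A2 : forall P, PZ w0 Z P ->
          (\int[P]_w (beta (Z (pt w)))%:E <= alpha P)%E) :
  forall n : nat, (0 < n)%N ->
    exists z : R, 0 <= z /\
      setminus_fun w0 G (Aset w0 Z alpha)
        (fun w : Omeas w0 => n%:R * Num.max (Z (pt w) - z) 0 - n%:R^-1).
Proof.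
move=> n n0.
have Z1 (w : Omeas w0) : 1 <= Z (pt w) by apply: hZ1; exact: proj2_sig w.
have mZ : measurable_fun setT (fun w : Omeas w0 => Z (pt w)).
  exact: measurable_fun_pt_continuous.
have n0' : 0 < n%:R :> R by rewrite ltr0n.
pose c := Num.max 0 (- beta 1).
have c0 : 0 <= c by rewrite le_max lexx.
have cb : - c <= beta 1 by rewrite lerNl le_max lexx orbT.
pose K := n%:R * (1 + c * n%:R).
have K0 : 0 <= K by rewrite mulr_ge0 ?addr_ge0 ?mulr_ge0 ?ler0n.
have /cvgryPge/(_ K) [M [_ betaK]] := hbeta_lim.
pose z := Num.max (M + 1) 0.
have Mz : M < z by rewrite lt_max ltrDl ltr01.
have z0 : 0 <= z by rewrite le_max lexx orbT.
exists z; split => //.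
have -> : (fun w : Omeas w0 => n%:R * Num.max (Z (pt w) - z) 0 - n%:R^-1) =
          (fun w => - (n%:R^-1 - excess Z n z w)) by apply/funext => w; rewrite opprB.
apply: setminus_fun_opp => //; apply: Aset_BZ; first exact: BZ_invn_sub_excess.
move=> P PZP.
have excess_beta (w : Omeas w0) : (1 + c * n%:R) * excess Z n z w - c <= beta (Z (pt w)).
  rewrite /excess mulrA [_ * n%:R]mulrC.
  exact: (superlinear_ge_scaled_pos_part hbeta_incr betaK K0 c0 cb Mz z0 (Z1 w)).
exact: (integral_invr_sub_add_ge0 n0' c0 (integrable_excess Z1 mZ n z0 PZP)
  (measurable_fun_nondecreasing_comp hbeta_incr mZ Z1) excess_beta
  (A2 _ PZP) (halpha _ PZP)).
Qed.
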